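(* Let $H$ be a real Hilbert space, $A:H\to c_0$ bounded linear with adjoint $A^*:\ell^1\to H$ (identifying $c_0^*=\ell^1$), with $A$ and $A^*$ injective. Let $H_n\subset H$ be a subspace of dimension $n$ with orthogonal projection $P_n$, and let $f^\delta\in H$. Call a solution $u^*$ of $\min\{\|u\|_1:u\in\ell^1,\ P_nA^*u=P_nf^\delta\}$ a solution with minimal support if every solution $u^{**}$ with $\operatorname{supp}u^{**}\subset\operatorname{supp}u^*$ satisfies $u^{**}=u^*$. Then every solution of this problem is a finite convex combination of solutions with minimal support.
   Context: $A^*$ is defined by $\langle A^*u,z\rangle=\sum_iu_i(Az)_i$. $\operatorname{supp}u=\{i:u_i\ne0\}$. *)

(* R : realType, H a complete normed space whose norm
   comes from an inner product (= real Hilbert space). *)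
From HB Require Import structures.
From mathcomp Require Import all_boot all_order all_algebra.
From mathcomp Require Import all_classical all_reals all_analysis.
Set Implicit Arguments. Unset Strict Implicit. Unset Printing Implicit Defensive.
Import Order.TTheory GRing.Theory Num.Theory.
Import numFieldNormedType.Exports.
Local Open Scope classical_set_scope.
Local Open Scope ring_scope.

Section Defs.
Variables (R : realType) (H : completeNormedModType R).

Definition is_inner_product (ip : H -> H -> R) : Prop :=
  [/\ forall x y, ip x y = ip y x,
      forall a x y z, ip (a *: x + y) z = a * ip x z + ip y z
    & forall x, ip x x = `|x| ^+ 2].

Definition bounded_linear_to_c0 (A : H -> nat -> R) : Prop :=
  [/\ forall a x y k, A (a *: x + y) k = a * A x k + A y k,
      exists C : R, forall x k, `|A x k| <= C * `|x|
    & forall x, A x @ \oo --> (0 : R)].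

Definition l1 (u : nat -> R) : Prop := (\sum_(i <oo) (`|u i|)%:E < +oo)%E.

Definition norm1 (u : nat -> R) : \bar R := (\sum_(i <oo) (`|u i|)%:E)%E.

Definition is_adjoint (ip : H -> H -> R) (A : H -> nat -> R)
  (Astar : (nat -> R) -> H) : Prop :=
  forall u, l1 u -> forall z, ip (Astar u) z = \big[+%R/0]_(i <oo) (u i * A z i).

(* b is a basis of an n-dimensional subspace H_n = span b *)
Definition lin_indep (n : nat) (b : 'I_n -> H) : Prop :=
  forall c : 'I_n -> R, \sum_(i < n) c i *: b i = 0 -> forall i, c i = 0.

Definition in_span (n : nat) (b : 'I_n -> H) (x : H) : Prop :=
  exists c : 'I_n -> R, x = \sum_(i < n) c i *: b i.

Definition is_orth_proj (ip : H -> H -> R) (n : nat) (b : 'I_n -> H)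
  (P : H -> H) : Prop :=
  forall x, in_span b (P x) /\ forall i, ip (x - P x) (b i) = 0.

Definition supp (u : nat -> R) : set nat := [set i | u i != 0].

Variables (Astar : (nat -> R) -> H) (P : H -> H) (f : H).

Definition feasible (u : nat -> R) : Prop := l1 u /\ P (Astar u) = P f.

Definition l1_solution (u : nat -> R) : Prop :=
  feasible u /\ forall v, feasible v -> (norm1 u <= norm1 v)%E.

Definition minimal_support_solution (u : nat -> R) : Prop :=
  l1_solution u /\
  forall v, l1_solution v -> supp v `<=` supp u -> v = u.

End Defs.

(* Feasibility of u means sum_k u_k c_k = (<f, b_i>)_i, where the vectors
   c_k = ((A b_i)_k)_i of R^n tend to 0.  From some index on, each c_k is a
   combination of c_0, ..., c_(N0-1) with coefficients of total size < 1, so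
   moving the mass of a solution at such a k onto the first N0 coordinates
   would lower its l^1 norm: all solutions vanish beyond a common index N.
   This reduces the problem to l^1-minimisation over an affine set of R^N.
   There two minimisers agree in sign coordinatewise; hence if w is not of
   minimal support, pick a minimiser v <> w with supp v included in supp w:
   along the line through w and v the l^1 norm is affine, hence constant, as
   long as no coordinate changes sign.  Walking in both directions until a
   coordinate vanishes writes w as a convex combination of two minimisers of
   smaller support; induct on the size of the support. *)

From HB Require Import structures.
From mathcomp Require Import all_boot all_order all_algebra.
From mathcomp Require Import all_classical all_reals all_analysis.
From mathcomp Require Import ring lra.
Import Order.TTheory GRing.Theory Num.Theory.
Import numFieldNormedType.Exports.
Local Open Scope classical_set_scope.
Local Open Scope ring_scope.

Definition supported_below {V : nmodType} (N : nat) (u : nat -> V) : Prop :=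
  forall k, (N <= k)%N -> u k = 0.

Section FinitelySupported.
Context {R : realType}.
Implicit Types (u v g : nat -> R).

Lemma sum_supported_below {V : nmodType} {g : nat -> V} {N M} :
  supported_below N g -> (N <= M)%N -> \sum_(i < M) g i = \sum_(i < N) g i.
Proof.
move=> g0 NM; rewrite [RHS](big_ord_widen _ g NM) [RHS]big_mkcond /=.
by apply: eq_bigr => i _; case: ifP => // /negbT; rewrite -leqNgt => /g0 ->.
Qed.

Lemma series_supported_below {g : nat -> R} {N} : supported_below N g ->
  \big[+%R/0]_(i <oo) g i = \sum_(i < N) g i.
Proof.
move=> g0; apply: cvg_lim => //; apply: cvg_near_cst; near=> m.
by rewrite (sum_supported_below g0) //; near: m; exact: nbhs_infty_ge.
Unshelve. all: by end_near. Qed.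

Lemma limn_series_ord g : limn (series g) = \big[+%R/0]_(i <oo) g i.
Proof. by rewrite seriesEord. Qed.

Lemma norm1_supported_below {g N} : supported_below N g ->
  norm1 g = (\sum_(i < N) `|g i|)%:E.
Proof.
move=> g0; have g0' : supported_below N (fun i => (`|g i|)%:E : \bar R).
  by move=> i /g0 ->; rewrite normr0.
rewrite /norm1 -sumEFin; apply: cvg_lim => //; apply: cvg_near_cst; near=> m.
by rewrite big_mkord (sum_supported_below g0') //; near: m; exact: nbhs_infty_ge.
Unshelve. all: by end_near. Qed.

Lemma l1_supported_below {g N} : supported_below N g -> l1 g.
Proof. by move=> g0; rewrite /l1 -/(norm1 g) (norm1_supported_below g0) ltry. Qed.

Lemma norm1_ge0 g : (0 <= norm1 g)%E.
Proof. by apply: nneseries_ge0 => k _ _; rewrite lee_fin. Qed.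

Lemma norm1D_le u v : (norm1 (fun k => (u k + v k)%R) <= norm1 u + norm1 v)%E.
Proof.
rewrite /norm1 -nneseriesD => [||k _ _]; last by rewrite lee_fin.
- apply: lee_nneseries => [k _ _|k _]; first by rewrite lee_fin.
  by rewrite -EFinD lee_fin ler_normD.
- by move=> k _ _; rewrite lee_fin.
Qed.

Lemma l1D {u v} : l1 u -> l1 v -> l1 (fun k => u k + v k).
Proof.
move=> hu hv; rewrite /l1 -/(norm1 _).
exact: le_lt_trans (norm1D_le u v) (lte_add_pinfty hu hv).
Qed.

Lemma norm1_partial_le g m : l1 g -> \sum_(i < m) `|g i| <= fine (norm1 g).
Proof.
move=> hg; rewrite -lee_fin fineK; last by rewrite ge0_fin_numE ?norm1_ge0.
rewrite -sumEFin -(big_mkord xpredT (fun i => (`|g i|)%:E)).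
by apply: nneseries_lim_ge => k _ _; rewrite lee_fin.
Qed.

Lemma is_cvg_series_l1_mul {v} {a : nat -> R} {M : R} : l1 v -> (forall k, `|a k| <= M) ->
  cvgn (series (fun k => v k * a k)).
Proof.
move=> hv ha; apply: normed_cvg; apply: nondecreasing_is_cvgn.
  rewrite /normed_series_of /series /=.
  by apply: (@nondecreasing_series _ _ xpredT 0) => m _ _.
exists (M * fine (norm1 v)) => _ [m _ <-] /=.
rewrite /normed_series_of /series /= big_mkord.
have M0 : 0 <= M by apply: le_trans (ha 0%N).
apply: (@le_trans _ _ (M * \sum_(i < m) `|v i|)); last first.
  by rewrite ler_wpM2l // norm1_partial_le.
rewrite mulr_sumr; apply: ler_sum => i _; rewrite normrM mulrC.
exact: ler_wpM2r.
Qed.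

Lemma norm1_exchange_lt u (mu : nat -> R) k M : l1 u -> u k != 0 ->
  (M <= k)%N -> supported_below M mu -> \sum_(j < M) `|mu j| < 1 ->
  (norm1 (fun j => (u j + u k * (mu j - (j == k)%:R))%R) < norm1 u)%E.
Proof.
move=> hu uk0 Mk mu0 mu_lt1.
pose u' j := u j - u k * (j == k)%:R.
have ek0 : supported_below k.+1 (fun j => u k * (j == k)%:R).
  by move=> j kj; rewrite gtn_eqF ?mulr0.
have norm1_ek : norm1 (fun j => u k * (j == k)%:R) = (`|u k|)%:E.
  rewrite (norm1_supported_below ek0) big_ord_recr /= eqxx mulr1 big1 ?add0r //.
  by move=> j _; rewrite ltn_eqF ?mulr0 ?normr0.
have norm1_split : norm1 u = (norm1 u' + (`|u k|)%:E)%E.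
  rewrite -norm1_ek /norm1 -nneseriesD => [||j _ _]; last by rewrite lee_fin.
  + apply: congr_lim; apply/funext => m; apply: eq_bigr => j _; congr (_%:E).
    rewrite /u'; case: eqP => [->|_]; rewrite ?mulr1 ?mulr0 ?subr0 ?normr0 ?addr0 //.
    by rewrite subrr normr0 add0r.
  + by move=> j _ _; rewrite lee_fin.
have u'_fin : norm1 u' \is a fin_num.
  rewrite ge0_fin_numE ?norm1_ge0 //; apply: le_lt_trans hu.
  by rewrite -/(norm1 u) norm1_split leeDl // lee_fin.
have norm1_mu : norm1 (fun j => u k * mu j) = (`|u k| * \sum_(j < M) `|mu j|)%:E.
  rewrite (@norm1_supported_below _ M) => [|j /mu0 ->]; last by rewrite mulr0.
  by rewrite mulr_sumr; under eq_bigr do rewrite normrM.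
rewrite norm1_split (_ : (fun j => _) = fun j => u' j + u k * mu j); last first.
  by apply/funext => j; rewrite /u'; lra.
apply: le_lt_trans (norm1D_le _ _) _; rewrite norm1_mu lteD2lE // lte_fin.
by rewrite -[ltRHS]mulr1 ltr_pM2l // normr_gt0.
Qed.

End FinitelySupported.

Section ConvexCombination.
Context {R : realFieldType}.

Definition convex_combination_of (S : set (nat -> R)) (u : nat -> R) : Prop :=
  exists (m : nat) (lam : 'I_m -> R) (w : 'I_m -> nat -> R),
    [/\ forall j, 0 <= lam j,
        \sum_(j < m) lam j = 1,
        forall j, S (w j)
      & u = fun k => \sum_(j < m) lam j * w j k].

Lemma convex_combination_of_mem S u : S u -> convex_combination_of S u.
Proof.
move=> Su; exists 1%N, (fun _ => 1), (fun _ => u).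
by split=> [_||_|]; rewrite ?big_ord1 //; apply/funext => k; rewrite big_ord1 mul1r.
Qed.

Lemma convex_combination_of_convex S (x y : nat -> R) (l : R) : 0 <= l <= 1 ->
  convex_combination_of S x -> convex_combination_of S y ->
  convex_combination_of S (fun k => l * x k + (1 - l) * y k).
Proof.
move=> /andP[l0 l1] [m1 [lam1 [w1 [lam1_ge0 lam1_sum Sw1 ->]]]]
  [m2 [lam2 [w2 [lam2_ge0 lam2_sum Sw2 ->]]]].
pose pick T (f1 : 'I_m1 -> T) (f2 : 'I_m2 -> T) (j : 'I_(m1 + m2)) :=
  match fintype.split j with inl i => f1 i | inr i => f2 i end.
have pickl T f1 f2 i : pick T f1 f2 (lshift m2 i) = f1 i.
  by rewrite /pick (unsplitK (inl i)).
have pickr T f1 f2 i : pick T f1 f2 (rshift m1 i) = f2 i.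
  by rewrite /pick (unsplitK (inr i)).
exists (m1 + m2)%N, (pick _ (fun i => l * lam1 i) (fun i => (1 - l) * lam2 i)),
  (pick _ w1 w2); split.
- by move=> j; rewrite /pick; case: fintype.split => i; apply: mulr_ge0 => //; lra.
- rewrite big_split_ord /= (eq_bigr _ (fun i _ => pickl _ _ _ i)).
  rewrite (eq_bigr _ (fun i _ => pickr _ _ _ i)) -!mulr_sumr lam1_sum lam2_sum.
  lra.
- by move=> j; rewrite /pick; case: fintype.split.
- apply/funext => k; rewrite big_split_ord /= !mulr_sumr.
  by congr (_ + _); apply: eq_bigr => i _; rewrite ?pickl ?pickr mulrA.
Qed.

End ConvexCombination.

Section RealFacts.
Context {R : realFieldType}.

Lemma sgr_mul_normrD_eq (x y : R) : `|x + y| = `|x| + `|y| -> (x = 0 -> y = 0) ->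
  Num.sg x * y = `|y|.
Proof.
move=> xyD y0; have [x0|] := eqVneq x 0; first by rewrite x0 (y0 x0) mulr0 normr0.
have nE (r : R) : (0 <= r /\ `|r| = r) \/ (r < 0 /\ `|r| = - r).
  by case: (leP 0 r) => r0; [left; rewrite ger0_norm | right; rewrite ltr0_norm].
rewrite neq_lt => /orP[x_lt0|x_gt0]; rewrite ?(ltr0_sg x_lt0) ?(gtr0_sg x_gt0).
all: case: (nE x) => -[? ex]; case: (nE y) => -[? ey]; case: (nE (x + y)) => -[? exy].
all: by rewrite ex ey exy in xyD *; lra.
Qed.

Lemma sum_eq0_exists_lt0 {I : finType} {s : I -> R} {i0} :
  \sum_i s i = 0 -> s i0 != 0 -> exists i, s i < 0.
Proof.
move=> s_sum0 si0; apply: contrapT => /forallNP no_neg.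
have s_ge0 i : true -> 0 <= s i by move=> _; rewrite leNgt; apply/negP/no_neg.
by move: si0; rewrite (psumr_eq0P s_ge0 s_sum0) ?eqxx.
Qed.

Lemma exists_last_nonneg_step {I : finType} {a s : I -> R} :
  (forall i, 0 <= a i) -> (forall i, s i != 0 -> 0 < a i) -> (exists i, s i < 0) ->
  exists t i0, [/\ 0 < t, s i0 != 0, a i0 + t * s i0 = 0
                 & forall i, 0 <= a i + t * s i].
Proof.
move=> a_ge0 a_gt0 [i1 si1].
case: (@arg_minP _ _ _ i1 (fun i => s i < 0) (fun i => a i / - s i) si1) => i0 si0 t_min.
have s0_neq0 : s i0 != 0 by rewrite ltr0_neq0.
exists (a i0 / - s i0), i0; split=> //.
- by rewrite divr_gt0 ?a_gt0 // oppr_gt0.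
- by field.
move=> i; have [si_lt0|si_ge0] := ltP (s i) 0; last first.
  by rewrite addr_ge0 ?a_ge0 // mulr_ge0 // divr_ge0 ?a_ge0 // oppr_ge0 ltW.
have := t_min i si_lt0; rewrite ler_pdivlMr ?oppr_gt0 // mulrN; lra.
Qed.

End RealFacts.

Definition line_point {R : pzRingType} (w v : nat -> R) (t : R) : nat -> R :=
  fun k => w k + t * (v k - w k).

Section L1MinimizersOnAffineSet.
Context {R : realType} (N : nat) (V : set (nat -> R)).
Hypothesis V_line : forall w v t, V w -> V v -> V (line_point w v t).
Hypothesis V_supp : forall u, V u -> supported_below N u.

Definition l1_minimizer (u : nat -> R) : Prop :=
  V u /\ forall v, V v -> \sum_(k < N) `|u k| <= \sum_(k < N) `|v k|.

Definition minimal_support_minimizer (u : nat -> R) : Prop :=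
  l1_minimizer u /\ forall v, l1_minimizer v -> supp v `<=` supp u -> v = u.

Definition support_size (u : nat -> R) : nat := #|[pred k : 'I_N | u k != 0]|.

Lemma supp_subset_eq0 {v w : nat -> R} {k} : supp v `<=` supp w -> w k = 0 -> v k = 0.
Proof.
move=> vw wk0; apply/eqP/negPn/negP => vk0.
by have := vw k vk0; rewrite /supp /= wk0 eqxx.
Qed.

Lemma l1_minimizer_norm_eq {u v} : l1_minimizer u -> l1_minimizer v ->
  \sum_(k < N) `|u k| = \sum_(k < N) `|v k|.
Proof. by move=> [Vu u_min] [Vv v_min]; apply/eqP; rewrite eq_le u_min // v_min. Qed.

Lemma l1_minimizer_normD {u v} : l1_minimizer u -> l1_minimizer v ->
  forall k, `|u k + v k| = `|u k| + `|v k|.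
Proof.
move=> umin vmin k; have [Nk|kN] := leqP N k.
  by rewrite (V_supp _ umin.1 _ Nk) (V_supp _ vmin.1 _ Nk) addr0 normr0 addr0.
pose gap (j : 'I_N) : R := `|u j| + `|v j| - `|u j + v j|.
have gap_ge0 j : true -> 0 <= gap j by rewrite subr_ge0 ler_normD.
suff /(psumr_eq0P gap_ge0)/(_ (Ordinal kN) isT) : \sum_j gap j = 0 by rewrite /gap; lra.
have mid := umin.2 _ (V_line _ _ 2^-1 umin.1 vmin.1).
have mid_norm (j : 'I_N) : `|line_point u v 2^-1 j| = 2^-1 * `|u j + v j|.
  have -> : line_point u v 2^-1 j = 2^-1 * (u j + v j) by rewrite /line_point; field.
  by rewrite normrM ger0_norm.
rewrite (eq_bigr _ (fun j _ => mid_norm j)) -mulr_sumr in mid.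
have uv := l1_minimizer_norm_eq umin vmin.
apply/eqP; rewrite eq_le (sumr_ge0 _ gap_ge0) andbT /gap sumrB big_split /=; lra.
Qed.

Lemma l1_minimizer_sgrM {u v} : l1_minimizer u -> l1_minimizer v -> supp v `<=` supp u ->
  forall k, Num.sg (u k) * v k = `|v k|.
Proof.
move=> umin vmin vu k; apply: sgr_mul_normrD_eq; first exact: l1_minimizer_normD.
exact: supp_subset_eq0.
Qed.

Lemma l1_minimizer_line_point w v t : l1_minimizer w -> l1_minimizer v ->
  supp v `<=` supp w ->
  (forall k : 'I_N, 0 <= Num.sg (w k) * line_point w v t k) ->
  l1_minimizer (line_point w v t).
Proof.
move=> wmin vmin vw sg_ge0; split=> [|v' Vv']; first exact: V_line wmin.1 vmin.1.
apply: le_trans (wmin.2 _ Vv'); rewrite le_eqVlt; apply/orP; left; apply/eqP.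
have normE (k : 'I_N) : `|line_point w v t k| = `|w k| + t * (`|v k| - `|w k|).
  have [wk0|wk_neq0] := eqVneq (w k) 0.
    by rewrite /line_point wk0 (supp_subset_eq0 vw wk0) !(subrr, normr0, mulr0, addr0).
  transitivity (Num.sg (w k) * line_point w v t k).
    by rewrite -(ger0_norm (sg_ge0 k)) normrM normr_sg wk_neq0 mul1r.
  by rewrite /line_point mulrDr mulrCA mulrBr (l1_minimizer_sgrM wmin vmin vw) -normrEsg.
rewrite (eq_bigr _ (fun k _ => normE k)) big_split /= -mulr_sumr sumrB.
by rewrite (l1_minimizer_norm_eq vmin wmin) subrr mulr0 addr0.
Qed.

Lemma l1_minimizer_shrink_support w v (c : R) :
  l1_minimizer w -> l1_minimizer v -> supp v `<=` supp w ->
  (exists k : 'I_N, c * (Num.sg (w k) * (v k - w k)) < 0) ->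
  exists2 t, 0 < t & l1_minimizer (line_point w v (c * t)) /\
                     (support_size (line_point w v (c * t)) < support_size w)%N.
Proof.
move=> wmin vmin vw s_neg.
pose s (k : 'I_N) := c * (Num.sg (w k) * (v k - w k)).
have w_gt0 k : s k != 0 -> 0 < `|w k|.
  move=> sk; rewrite normr_gt0; apply: contraNneq sk => wk0.
  by rewrite /s wk0 sgr0 mul0r mulr0.
have [t [k0 [t_gt0 sk0 root_k0 all_ge0]]] :=
  exists_last_nonneg_step (a := fun k : 'I_N => `|w k|) (s := s)
    (fun k => normr_ge0 (w k)) w_gt0 s_neg.
have sgE (k : 'I_N) : Num.sg (w k) * line_point w v (c * t) k = `|w k| + t * s k.
  by rewrite /line_point /s normrEsg; ring.
exists t => //; split.
  by apply: l1_minimizer_line_point => // k; rewrite sgE.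
rewrite /support_size; apply: proper_card; apply/fintype.properP; split.
  apply/fintype.subsetP => k; rewrite !inE; apply: contraNN => /eqP wk0.
  by rewrite /line_point wk0 (supp_subset_eq0 vw wk0) subrr mulr0 addr0.
have wk0 : w k0 != 0 by rewrite -normr_gt0 w_gt0.
exists k0; rewrite inE // negbK.
by have := sgE k0; rewrite root_k0 => /eqP; rewrite mulf_eq0 sgr_eq0 (negbTE wk0).
Qed.

Lemma l1_minimizer_split w : l1_minimizer w -> ~ minimal_support_minimizer w ->
  exists z1 z2 (l : R), [/\ 0 <= l <= 1, w = (fun k => l * z1 k + (1 - l) * z2 k),
    l1_minimizer z1 /\ (support_size z1 < support_size w)%N
  & l1_minimizer z2 /\ (support_size z2 < support_size w)%N].
Proof.
move=> wmin not_ms.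
have [v [vmin vw v_neq_w]] : exists v, [/\ l1_minimizer v, supp v `<=` supp w & v <> w].
  apply: contrapT => no_v; apply: not_ms; split=> // v vmin vw.
  by apply: contrapT => v_neq_w; apply: no_v; exists v.
pose s (k : 'I_N) := Num.sg (w k) * (v k - w k).
have s_sum0 : \sum_k s k = 0.
  under eq_bigr do rewrite /s mulrBr (l1_minimizer_sgrM wmin vmin vw) -normrEsg.
  by rewrite sumrB (l1_minimizer_norm_eq vmin wmin) subrr.
have [k0 sk0] : exists k0, s k0 != 0.
  apply: contrapT => /forallNP s0; apply: v_neq_w; apply/funext => k.
  have [Nk|kN] := leqP N k.
    by rewrite (V_supp _ vmin.1 _ Nk) (V_supp _ wmin.1 _ Nk).
  move/negP/negPn: (s0 (Ordinal kN)); rewrite mulf_eq0 sgr_eq0 subr_eq0 /=.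
  by case/orP=> /eqP // wk0; rewrite wk0 (supp_subset_eq0 vw wk0).
have [kn skn] : exists k, 1 * s k < 0.
  by under eq_exists do rewrite mul1r; exact: sum_eq0_exists_lt0 s_sum0 sk0.
have [kp skp] : exists k, -1 * s k < 0.
  apply: (sum_eq0_exists_lt0 (i0 := k0)); first by rewrite -mulr_sumr s_sum0 mulr0.
  by rewrite mulN1r oppr_eq0.
have [t1 t1_gt0 [z1min z1_small]] :=
  l1_minimizer_shrink_support w v 1 wmin vmin vw (ex_intro _ kn skn).
have [t2 t2_gt0 [z2min z2_small]] :=
  l1_minimizer_shrink_support w v (-1) wmin vmin vw (ex_intro _ kp skp).
exists (line_point w v (-1 * t2)), (line_point w v (1 * t1)), (t1 / (t1 + t2)).
have t12_gt0 : 0 < t1 + t2 by rewrite addr_gt0.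
split=> //.
- apply/andP; split; first by rewrite divr_ge0 // ltW.
  by rewrite ler_pdivrMr // mul1r lerDl ltW.
- by apply/funext => k; rewrite /line_point; field; rewrite gt_eqF.
Qed.

Lemma l1_minimizer_convex_combination w :
  l1_minimizer w -> convex_combination_of minimal_support_minimizer w.
Proof.
move: {2}(support_size w).+1 (ltnSn (support_size w)) => m.
elim: m w => // m IH w; rewrite ltnS => w_small wmin.
have [ms|not_ms] := pselect (minimal_support_minimizer w).
  exact: convex_combination_of_mem.
have [z1 [z2 [l [l01 w_eq [z1min z1_small] [z2min z2_small]]]]] :=
  l1_minimizer_split w wmin not_ms.
rewrite w_eq; apply: convex_combination_of_convex l01 (IH _ _ z1min) (IH _ _ z2min).
  exact: leq_trans z1_small w_small.
exact: leq_trans z2_small w_small.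
Qed.

End L1MinimizersOnAffineSet.

Section VanishingCoordinates.
Context {R : realType}.

Lemma cvgn_sum {m} (f : 'I_m -> nat -> R) (l : 'I_m -> R) :
  (forall j, f j k @[k --> \oo] --> l j) ->
  \sum_(j < m) f j k @[k --> \oo] --> \sum_(j < m) l j.
Proof. by move=> fl; apply: cvg_big => //; exact: add_continuous. Qed.

Lemma eventually_sum_coord_lt1 {n m} (a : 'I_n -> nat -> R) (Q : 'M[R]_(n, m)) :
  (forall i, a i k @[k --> \oo] --> 0) ->
  \forall k \near \oo, \sum_(j < m) `|\sum_(i < n) a i k * Q i j| < 1.
Proof.
move=> a0.
have lim : \sum_(j < m) `|\sum_(i < n) a i k * Q i j| @[k --> \oo] -->
           \sum_(j < m) `|\sum_(i < n) 0 * Q i j|.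
  apply: cvgn_sum => j; apply: cvg_norm; apply: cvgn_sum => i.
  by apply: cvgM => //; exact: cvg_cst.
rewrite big1 in lim => [|j _]; last by rewrite big1 ?normr0 // => i _; rewrite mul0r.
exact: cvgr_lt lim _ ltr01.
Qed.

End VanishingCoordinates.

Section PrefixSpan.
Context {F : fieldType} {n : nat} (a : 'I_n -> nat -> F).

Definition column k : 'rV[F]_n := \row_i a i k.

Definition prefix_mx m : 'M[F]_(m, n) := \matrix_(j < m) column j.

Lemma column_sub_prefix_mx k m : (k < m)%N -> (column k <= prefix_mx m)%MS.
Proof. by move=> km; rewrite -(rowK column (Ordinal km)) row_sub. Qed.

Lemma prefix_mx_mono m m' : (m <= m')%N -> (prefix_mx m <= prefix_mx m')%MS.
Proof.
move=> mm'; apply/row_subP => j; rewrite rowK.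
exact: column_sub_prefix_mx (leq_trans (ltn_ord j) mm').
Qed.

Lemma prefix_mx_spans : exists N0, forall k, (column k <= prefix_mx N0)%MS.
Proof.
have [m0 rank_max] : exists m0, forall m, (\rank (prefix_mx m) <= \rank (prefix_mx m0))%N.
  pose P r := `[< exists m, \rank (prefix_mx m) = r >].
  have exP : exists r, P r by exists (\rank (prefix_mx 0)); apply/asboolP; exists 0%N.
  have ubP r : P r -> (r <= n)%N by move=> /asboolP [m <-]; exact: rank_leq_col.
  case: (ex_maxnP exP ubP) => r /asboolP [m0 <-] r_max.
  by exists m0 => m; apply: r_max; apply/asboolP; exists m.
exists m0 => k; pose m := maxn m0 k.+1.
have sub_m : (prefix_mx m0 <= prefix_mx m)%MS by apply: prefix_mx_mono; exact: leq_maxl.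
have sub_m0 : (prefix_mx m <= prefix_mx m0)%MS.
  by have [_ <-] := mxrank_leqif_sup sub_m; rewrite eqn_leq rank_max mxrankS.
apply: submx_trans sub_m0; exact: column_sub_prefix_mx (leq_maxr m0 k.+1).
Qed.

Lemma prefix_mx_coord : exists N0 (Q : 'M[F]_(n, N0)), forall k i,
  a i k = \sum_(j < N0) (\sum_(l < n) a l k * Q l j) * a i j.
Proof.
have [N0 spans] := prefix_mx_spans; exists N0, (pinvmx (prefix_mx N0)) => k i.
have /(congr1 (fun x : 'rV_n => x 0 i)) := mulmxKpV (spans k).
rewrite !mxE => <-; apply: eq_bigr => j _; rewrite !mxE; congr (_ * _).
by apply: eq_bigr => l _; rewrite mxE.
Qed.

End PrefixSpan.

Section InnerProduct.
Context {R : realType} {H : completeNormedModType R} (ip : H -> H -> R).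
Hypothesis ipP : is_inner_product ip.

Lemma ip0l z : ip 0 z = 0.
Proof.
by case: ipP => _ ipD _; have := ipD 1 0 0 z; rewrite scale1r addr0 mul1r; lra.
Qed.

Lemma ipBl x y z : ip (x - y) z = ip x z - ip y z.
Proof. by case: ipP => _ ipD _; rewrite addrC -scaleN1r ipD mulN1r addrC. Qed.

Lemma ip_suml m (c : 'I_m -> R) (e : 'I_m -> H) z :
  ip (\sum_(i < m) c i *: e i) z = \sum_(i < m) c i * ip (e i) z.
Proof.
case: ipP => _ ipD _; elim/big_rec2: _ => [|i y1 y2 _ <-]; first exact: ip0l.
exact: ipD.
Qed.

Lemma ip_eq0 x : ip x x = 0 -> x = 0.
Proof. by case: ipP => _ _ ->; move/eqP; rewrite sqrf_eq0 normr_eq0 => /eqP. Qed.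

Lemma orth_proj_ip {m} {e : 'I_m -> H} {Pr} : is_orth_proj ip e Pr ->
  forall x i, ip (Pr x) (e i) = ip x (e i).
Proof. by move=> Pr_orth x i; have [_ /(_ i)] := Pr_orth x; rewrite ipBl; lra. Qed.

Lemma orth_proj_eqE {m} {e : 'I_m -> H} {Pr} : is_orth_proj ip e Pr ->
  forall x y, Pr x = Pr y <-> forall i, ip x (e i) = ip y (e i).
Proof.
move=> Pr_orth x y; split=> [Pxy i|xy].
  by rewrite -(orth_proj_ip Pr_orth x) -(orth_proj_ip Pr_orth y) Pxy.
apply/eqP; rewrite -subr_eq0; apply/eqP/ip_eq0.
have [[cx Px] _] := Pr_orth x; have [[cy Py] _] := Pr_orth y.
rewrite {1}Px {1}Py -sumrB; under eq_bigr do rewrite -scalerBl.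
rewrite ip_suml big1 // => i _; case: ipP => ipC _ _.
by rewrite ipC ipBl !(orth_proj_ip Pr_orth) xy subrr mulr0.
Qed.

End InnerProduct.

Section L1Problem.
Context {R : realType} {H : completeNormedModType R} {ip : H -> H -> R}
  {A : H -> nat -> R} {Astar : (nat -> R) -> H} {n : nat} {b : 'I_n -> H}
  {P : H -> H} {f : H}.
Hypotheses (ipP : is_inner_product ip) (A_c0 : bounded_linear_to_c0 A)
  (Astar_adj : is_adjoint ip A Astar) (P_orth : is_orth_proj ip b P).

Lemma feasibleE v : feasible Astar P f v <->
  l1 v /\ forall i, ip (Astar v) (b i) = ip f (b i).
Proof.
by split=> -[v_l1 Pv]; split=> //; apply/(orth_proj_eqE _ ipP P_orth).
Qed.

Lemma adjoint_supported_below {w N} z : supported_below N w ->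
  ip (Astar w) z = \sum_(k < N) w k * A z k.
Proof.
move=> w0; have wA0 : supported_below N (fun k => w k * A z k).
  by move=> k /w0 ->; rewrite mul0r.
by rewrite (Astar_adj _ (l1_supported_below w0)); exact: series_supported_below wA0.
Qed.

Lemma adjointD_supported_below u {d M} z : l1 u -> supported_below M d ->
  ip (Astar (fun k => u k + d k)) z = ip (Astar u) z + \sum_(k < M) d k * A z k.
Proof.
move=> u_l1 d0; have d_l1 := l1_supported_below d0.
have [C A_bd] : exists C : R, forall k, `|A z k| <= C.
  by case: A_c0 => _ [C A_bd] _; exists (C * `|z|).
rewrite (Astar_adj _ (l1D u_l1 d_l1)) (Astar_adj _ u_l1).
rewrite -(limn_series_ord (fun k => (u k + d k) * A z k)).
rewrite -(limn_series_ord (fun k => u k * A z k)) (_ : (fun k => _) =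
  (fun k => u k * A z k) + (fun k => d k * A z k)); last first.
  by apply/funext => k /=; rewrite mulrDl.
rewrite lim_seriesD; last 2 first.
- exact: (is_cvg_series_l1_mul u_l1 A_bd).
- exact: (is_cvg_series_l1_mul d_l1 A_bd).
have dA0 : supported_below M (fun k => d k * A z k) by move=> k /d0 ->; rewrite mul0r.
by congr (_ + _); rewrite limn_series_ord; exact: series_supported_below dA0.
Qed.

Lemma feasibleD_supported_below {u d M} : feasible Astar P f u ->
  supported_below M d -> (forall i, \sum_(k < M) d k * A (b i) k = 0) ->
  feasible Astar P f (fun k => u k + d k).
Proof.
move=> /feasibleE [u_l1 u_eq] d0 d_eq; apply/feasibleE.
split=> [|i]; first exact: l1D (l1_supported_below d0).
by rewrite (adjointD_supported_below _ _ u_l1 d0) d_eq addr0.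
Qed.

Lemma l1_solution_supported_below :
  exists N, forall u, l1_solution Astar P f u -> supported_below N u.
Proof.
pose a i k := A (b i) k.
have [N0 [Q coord]] := prefix_mx_coord a.
have a_c0 i : a i k @[k --> \oo] --> 0 by case: A_c0 => _ _; apply.
have [N1 _ small] := eventually_sum_coord_lt1 a Q a_c0.
exists (maxn N0 N1) => u [u_feas u_min] k; rewrite geq_max => /andP[N0k N1k].
apply/eqP/negPn/negP => uk_neq0.
pose c j := \sum_(l < n) a l k * Q l j.
pose mu j := oapp c 0 (insub j).
have muE (j : 'I_N0) : mu j = c j by rewrite /mu valK.
have mu0 : supported_below N0 mu by move=> j N0j; rewrite /mu insubF // ltnNge N0j.
pose d j := u k * (mu j - (j == k)%:R).
have d0 : supported_below k.+1 d.
  move=> j kj; rewrite /d mu0 ?gtn_eqF ?subrr ?mulr0 //.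
  exact: leq_trans N0k (ltnW kj).
have d_eq i : \sum_(j < k.+1) d j * A (b i) j = 0.
  rewrite /d; under eq_bigr do rewrite mulrBr mulrBl.
  rewrite sumrB [X in _ - X]big_ord_recr /= eqxx mulr1.
  rewrite [X in _ - (X + _)]big1 ?add0r => [|j _]; last by rewrite ltn_eqF ?mulr0 ?mul0r.
  have muA0 : supported_below N0 (fun j => u k * mu j * A (b i) j).
    by move=> j /mu0 ->; rewrite mulr0 mul0r.
  rewrite (sum_supported_below muA0 (leqW N0k)) (_ : A (b i) k = a i k) // coord.
  by apply/eqP; rewrite subr_eq0 mulr_sumr; apply/eqP/eq_bigr => j _; rewrite muE mulrA.
have mu_small : \sum_(j < N0) `|mu j| < 1.
  by under eq_bigr do rewrite muE; exact: small.
move: (u_min _ (feasibleD_supported_below u_feas d0 d_eq)); rewrite leNgt => /negP; apply.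
exact: norm1_exchange_lt u_feas.1 uk_neq0 N0k mu0 mu_small.
Qed.

Section SupportBound.
Variable N : nat.
Let V := [set u | feasible Astar P f u /\ supported_below N u].

Lemma feasible_line_point w v t : V w -> V v -> V (line_point w v t).
Proof.
move=> [/feasibleE [_ w_eq] w0] [/feasibleE [_ v_eq] v0].
have z0 : supported_below N (line_point w v t).
  by move=> k Nk; rewrite /line_point w0 // v0 // subrr mulr0 addr0.
split=> //; apply/feasibleE; split=> [|i]; first exact: l1_supported_below z0.
move: (w_eq i) (v_eq i); rewrite (adjoint_supported_below _ w0).
rewrite !(adjoint_supported_below _ v0) (adjoint_supported_below _ z0) => wi vi.
have -> : \sum_(k < N) line_point w v t k * A (b i) k = \sum_(k < N) w k * A (b i) k
    + t * (\sum_(k < N) v k * A (b i) k - \sum_(k < N) w k * A (b i) k).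
  rewrite -sumrB mulr_sumr -big_split; apply: eq_bigr => k _.
  by rewrite /line_point /=; ring.
by rewrite wi vi subrr mulr0 addr0.
Qed.

Hypothesis solution_below : forall u, l1_solution Astar P f u -> supported_below N u.

Lemma l1_solutionE u0 : l1_solution Astar P f u0 ->
  forall u, l1_solution Astar P f u <-> l1_minimizer N V u.
Proof.
move=> u0_sol u; split=> [u_sol|[[u_feas u0'] u_min]].
  have u_below := solution_below _ u_sol.
  split=> [|v [v_feas v0]]; first by split=> //; case: u_sol.
  have := u_sol.2 v v_feas.
  by rewrite (norm1_supported_below u_below) (norm1_supported_below v0).
split=> // v v_feas; apply: le_trans (u0_sol.2 v v_feas).
have u0_below := solution_below _ u0_sol.
rewrite (norm1_supported_below u0') (norm1_supported_below u0_below) lee_fin.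
exact: u_min (conj u0_sol.1 u0_below).
Qed.

End SupportBound.

End L1Problem.

Theorem lemma5 (R : realType) (H : completeNormedModType R)
  (ip : H -> H -> R) (A : H -> nat -> R) (Astar : (nat -> R) -> H)
  (n : nat) (b : 'I_n -> H) (P : H -> H) (f : H) :
  is_inner_product ip ->
  bounded_linear_to_c0 A ->
  is_adjoint ip A Astar ->
  (forall x y, A x = A y -> x = y) ->
  (forall u v, l1 u -> l1 v -> Astar u = Astar v -> u = v) ->
  lin_indep b ->
  is_orth_proj ip b P ->
  forall u, l1_solution Astar P f u ->
  exists (m : nat) (lam : 'I_m -> R) (w : 'I_m -> nat -> R),
    [/\ forall j, 0 <= lam j,
        \sum_(j < m) lam j = 1,
        forall j, minimal_support_solution Astar P f (w j)
      & u = fun k => \sum_(j < m) lam j * w j k].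
Proof.
move=> ipP A_c0 Astar_adj _ _ _ P_orth u u_sol.
have [N solution_below] := l1_solution_supported_below (f := f) ipP A_c0 Astar_adj P_orth.
have solE := l1_solutionE N solution_below u u_sol.
have V_supp v : feasible Astar P f v /\ supported_below N v -> supported_below N v.
  by case.
have := l1_minimizer_convex_combination _ _ (feasible_line_point ipP Astar_adj P_orth N)
  V_supp u ((solE u).1 u_sol).
case=> m [lam [w [lam_ge0 lam_sum w_ms ->]]]; exists m, lam, w; split=> // j.
have [/solE w_sol w_min] := w_ms j; split=> // v /solE; exact: w_min.
Qed.
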